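(* Let $\pi=(\pi_n^{n+1}\colon(X_{n+1},f_{n+1})\to(X_n,f_n))_{n\ge1}$ be an inverse sequence of equivariant maps satisfying MLC(1), and let $(X,f)=\lim_\pi(X_n,f_n)$. Suppose $Y_n\subset X_n$, $n\ge1$, are closed $f_n$-invariant subsets such that (1) $\pi_n^{n+1}(Y_{n+1})\subset Y_n$ for every $n\ge1$, and (2) every $x=(x_n)_{n\ge1}\in X$ satisfies $x_n\in Y_n$ for all $n\ge1$. Let $g_n=f_n|_{Y_n}$ and $\tilde\pi_n^{n+1}=\pi_n^{n+1}|_{Y_{n+1}}\colon Y_{n+1}\to Y_n$. Then the inverse sequence $\tilde\pi=(\tilde\pi_n^{n+1}\colon(Y_{n+1},g_{n+1})\to(Y_n,g_n))_{n\ge1}$ satisfies MLC(1).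
   Context: Each $X_n$ is a compact metric space, $f_n$ a continuous self-map, $\pi_n^{n+1}\colon X_{n+1}\to X_n$ continuous with $f_n\circ\pi_n^{n+1}=\pi_n^{n+1}\circ f_{n+1}$. $X=\{(x_n)\in\prod_n X_n:\pi_n^{n+1}(x_{n+1})=x_n\ \forall n\}$ and $f((x_n))=(f_n(x_n))$. For $m\ge n$, $\pi_n^m=\pi_n^{n+1}\circ\cdots\circ\pi_{m-1}^m$ ($\pi_n^n$ the identity). An inverse sequence $(p_n\colon Z_{n+1}\to Z_n)$ satisfies MLC(1) if $p_n(Z_{n+1})=p_n(p_{n+1}(Z_{n+2}))$ for every $n\ge1$. *)

From HB Require Import structures.
From mathcomp Require Import all_boot all_order all_algebra.
From mathcomp Require Import all_classical all_reals all_analysis.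
Set Implicit Arguments. Unset Strict Implicit. Unset Printing Implicit Defensive.
Local Open Scope classical_set_scope.

(* Inverse limit of an inverse sequence (p n : Z n.+1 -> Z n), indices from 0. *)
Definition invlim (Z : nat -> Type) (p : forall n, Z n.+1 -> Z n) :
  set (forall n, Z n) :=
  [set x | forall n, p n (x n.+1) = x n].

(* MLC(1) for the inverse sequence of restrictions p n|_{Y n.+1} : Y n.+1 -> Y n
   (assuming p n (Y n.+1) ⊆ Y n):  p n (Y n.+1) = p n (p n.+1 (Y n.+2)). *)
Definition MLC1_on (Z : nat -> Type) (p : forall n, Z n.+1 -> Z n)
  (Y : forall n, set (Z n)) : Prop :=
  forall n, p n @` Y n.+1 = p n @` (p n.+1 @` Y n.+2).

Definition MLC1 (Z : nat -> Type) (p : forall n, Z n.+1 -> Z n) : Prop :=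
  MLC1_on p (fun n => [set: Z n]).

From HB Require Import structures.
From mathcomp Require Import all_boot all_order all_algebra.
From mathcomp Require Import all_classical all_reals all_analysis.
Local Open Scope classical_set_scope.

(* Under MLC(1) a point of p_n(X_{n+1}) has a preimage in p_{n+1}(X_{n+2}), so
   by dependent choice it is the n-th coordinate of a point of the inverse
   limit, and therefore lies in Y_n by (2).  Given y in Y_{n+1}, lifting p_n y
   twice in this way produces d in p_{n+2}(X_{n+3}), a subset of Y_{n+2}, with
   p_n (p_{n+1} d) = p_n y. *)

Section MLC1_threads.
Context {Z : nat -> Type} {p : forall n, Z n.+1 -> Z n}.

Lemma MLC1_lift (mlc : MLC1 p) {n b} :
  range (p n) b -> exists2 c, range (p n.+1) c & p n c = b.
Proof.
rewrite (mlc n) => -[c [d _ <-] <-].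
by exists (p n.+1 d) => //; exists d.
Qed.

Lemma MLC1_shift : MLC1 p -> MLC1 (fun n => p n.+1).
Proof. by move=> mlc n; exact: mlc n.+1. Qed.

Definition invlim_cons (x : forall n, Z n.+1) : forall n, Z n :=
  fun n => match n return Z n with 0 => p 0 (x 0) | m.+1 => x m end.

Lemma invlim_cons_invlim (x : forall n, Z n.+1) :
  invlim (fun n => p n.+1) x -> invlim p (invlim_cons x).
Proof. by move=> xlim [|n]. Qed.

Section lift_sequence.
Hypothesis mlc : MLC1 p.

Let lift {n} (b : {b | range (p n) b}) : {c | range (p n.+1) c & p n c = sval b} :=
  cid2 (MLC1_lift mlc (svalP b)).

Fixpoint lift_seq (b : {b | range (p 0) b}) n : {b | range (p n) b} :=
  match n with
  | 0 => b
  | m.+1 => exist _ (s2val (lift (lift_seq b m))) (s2valP (lift (lift_seq b m)))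
  end.

Lemma MLC1_range_thread0 {b} : range (p 0) b -> exists2 x, invlim p x & x 0 = b.
Proof.
move=> rb; exists (fun n => sval (lift_seq (exist _ b rb) n)) => // n.
exact: s2valP' (lift (lift_seq (exist _ b rb) n)).
Qed.

End lift_sequence.
End MLC1_threads.
Arguments invlim_cons {Z} p x n.

(* Induct on n over all inverse sequences, dropping the first space: a thread of
   the shifted sequence through b at n extends to one of p through b at n+1. *)
Lemma MLC1_range_thread {Z : nat -> Type} {p : forall n, Z n.+1 -> Z n} {n b} :
  MLC1 p -> range (p n) b -> exists2 x, invlim p x & x n = b.
Proof.
elim: n Z p b => [|n IH] Z p b mlc rb; first exact: (MLC1_range_thread0 mlc rb).
have [x xlim <-] := IH _ (fun n => p n.+1) b (MLC1_shift mlc) rb.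
by exists (invlim_cons p x); first exact: invlim_cons_invlim.
Qed.

Lemma MLC1_on_of_range_sub (Z : nat -> Type) (p : forall n, Z n.+1 -> Z n)
    (Y : forall n, set (Z n)) :
  MLC1 p -> (forall n, p n @` Y n.+1 `<=` Y n) ->
  (forall n, range (p n) `<=` Y n) -> MLC1_on p Y.
Proof.
move=> mlc pY rangeY n; apply/seteqP; split => b.
  case=> y _ <-; have [c rc <-] := MLC1_lift mlc (imageT (p n) y).
  have [d rd <-] := MLC1_lift mlc rc.
  by exists (p n.+1 d) => //; exists d => //; exact: rangeY.
by case=> _ [d Yd <-] <-; exists (p n.+1 d) => //; apply: pY; exists d.
Qed.

Theorem lemma3p4 (R : realType) (X : nat -> pseudoMetricType R)
  (f : forall n, X n -> X n) (p : forall n, X n.+1 -> X n)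
  (Y : forall n, set (X n)) :
  (forall n, compact [set: X n]) ->
  (forall n, hausdorff_space (X n)) ->
  (forall n, continuous (f n)) ->
  (forall n, continuous (p n)) ->
  (forall n, f n \o p n = p n \o f n.+1) ->
  MLC1 p ->
  (forall n, closed (Y n)) ->
  (forall n, f n @` Y n `<=` Y n) ->
  (forall n, p n @` Y n.+1 `<=` Y n) ->
  (forall x, invlim p x -> forall n, Y n (x n)) ->
  MLC1_on p Y.
Proof.
move=> _ _ _ _ _ mlc _ _ pY limY; apply: MLC1_on_of_range_sub => // n b rb.
by have [x /limY xY <-] := MLC1_range_thread mlc rb.
Qed.
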